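(* Let $R:=\sqrt{D}$, let $x_{0}=R^{-1}\beta$, and let $p_{0}=q_{0}=0$. For every $k\in\mathbb{N}$, consider the routine \[ y_{k}=\operatorname{proj}_{R\mathcal{P}_{3}}(x_{k}+p_{k}),\quad p_{k+1}=x_{k}+p_{k}-y_{k},\quad x_{k+1}=\operatorname{proj}_{R\Delta_{N}}(y_{k}+q_{k}),\quad q_{k+1}=y_{k}+q_{k}-x_{k+1}. \] Then $(x_{k})$ converges to a point $q$ and $p=R^{-1}q$ is the solution to the problem \[ \min_{p\in\mathcal{P}} \tfrac{1}{2}p^{\top}Dp-p^{\top}\beta \] with $\mathcal{P}=\{p\in\Delta_{N}\,:\,\mu_{-}\leq \sum_{i=1}^{N}p_{i}\xi_{i}\leq\mu_{+}\}$.
   Context: $\mathcal{H}$ is a real Hilbert space, $\lambda>0$, $a_{i}\in\mathcal{H}\setminus\{0\}$ and $\xi_{i}\in\mathbb{R}$ for $i=1,\ldots,N$, $\mathbf{x}=(x_1,\ldots,x_N)\in\mathcal{H}^N$. $D:=\mathrm{diag}(\lambda\|a_{1}\|^{2},\ldots,\lambda\|a_{N}\|^{2})$ (a positive definite diagonal matrix) and $\beta:=(\langle a_{i},x_{i}\rangle+\xi_{i})_{i=1}^{N}\in\mathbb{R}^N$. $\Delta_{N}=\{p\in\mathbb{R}^{N}_{+}:\sum_{i=1}^{N}p_{i}=1\}$ is the probability simplex, $\mathcal{P}_{1}=\{p\in\mathbb{R}^{N}:\sum_{i=1}^N p_i=1\}$, $\mathcal{P}_{3}=\{p\in\mathbb{R}^{N}\,:\,\mu_{-}\leq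 \sum_{i=1}^{N}p_{i}\xi_{i}\leq\mu_{+}\}$ with $\mu_{-},\mu_{+}\in\mathbb{R}$ such that $\mathrm{int}(\mathbb{R}^{N}_{+})\cap\mathrm{int}(\mathcal{P}_{3})\cap\mathcal{P}_{1}\neq\emptyset$. $\operatorname{proj}_{C}$ denotes the Euclidean projection onto a set $C$, and $RC=\{Rp:p\in C\}$. *)

From HB Require Import structures.
From mathcomp Require Import all_boot all_order all_algebra.
From mathcomp Require Import all_classical all_reals all_analysis.
Set Implicit Arguments. Unset Strict Implicit. Unset Printing Implicit Defensive.
Import Order.TTheory GRing.Theory Num.Theory.
Import numFieldNormedType.Exports.
Local Open Scope classical_set_scope.
Local Open Scope ring_scope.

Definition is_hilbert_inner (R : realType) (V : completeNormedModType R)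
  (ip : V -> V -> R) : Prop :=
  [/\ forall u v, ip u v = ip v u,
      forall a u v w, ip (a *: u + v) w = a * ip u w + ip v w,
      forall v, v != 0 -> 0 < ip v v
    & forall v, `|v| = Num.sqrt (ip v v)].

Definition sqnorm (R : realType) (N : nat) (v : 'rV[R]_N) : R :=
  \sum_(i < N) (v ord0 i) ^+ 2.

Definition is_proj (R : realType) (N : nat) (C : set 'rV[R]_N)
  (x y : 'rV[R]_N) : Prop :=
  C y /\ forall z, C z -> sqnorm (x - y) <= sqnorm (x - z).

Definition simplex (R : realType) (N : nat) : set 'rV[R]_N :=
  [set p | (forall i, 0 <= p ord0 i) /\ \sum_(i < N) p ord0 i = 1].
Definition P1set (R : realType) (N : nat) : set 'rV[R]_N :=
  [set p | \sum_(i < N) p ord0 i = 1].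
Definition nonneg_orthant (R : realType) (N : nat) : set 'rV[R]_N :=
  [set p | forall i, 0 <= p ord0 i].
Definition P3set (R : realType) (N : nat) (xi : 'I_N -> R) (mum mup : R)
  : set 'rV[R]_N :=
  [set p | mum <= \sum_(i < N) p ord0 i * xi i <= mup].
Definition Pset (R : realType) (N : nat) (xi : 'I_N -> R) (mum mup : R)
  : set 'rV[R]_N :=
  @simplex R N `&` P3set xi mum mup.

(* Multiplication by the diagonal matrix diag(r) and the image r C. *)
Definition dmul (R : realType) (N : nat) (r : 'I_N -> R) (p : 'rV[R]_N)
  : 'rV[R]_N := \row_i (r i * p ord0 i).
Definition dimage (R : realType) (N : nat) (r : 'I_N -> R) (C : set 'rV[R]_N)
  : set 'rV[R]_N := [set dmul r p | p in C].

Definition objective (R : realType) (N : nat) (d : 'I_N -> R) (beta : 'rV[R]_N)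
  (p : 'rV[R]_N) : R :=
  2^-1 * \sum_(i < N) d i * (p ord0 i) ^+ 2 - \sum_(i < N) p ord0 i * beta ord0 i.

From HB Require Import structures.
From mathcomp Require Import all_boot all_order all_algebra.
From mathcomp Require Import all_classical all_reals all_analysis.
From mathcomp Require Import ring lra.
Import Order.TTheory GRing.Theory Num.Theory.
Import numFieldNormedType.Exports.
Local Open Scope classical_set_scope.
Local Open Scope ring_scope.

(* Up to the change of variables p = R^-1 z, the objective is
   [- proximity (R^-1 beta) z], so minimizing it over P means projecting
   x0 = R^-1 beta onto A := R P3 inter B := R Delta_N, and the routine is
   Dykstra's algorithm for A and B.  Boyle and Dykstra's argument: using the
   invariant x k + p k + q k = x0 and the obtuse-angle characterisation of the
   two projections, the energy of the iteration decreases by half the squared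
   increments of p and q, and dominates proximity x0 c + |x k - c|^2 / 2 for
   every c in A inter B.  Hence the squared increments are summable, so
   |p k|^2 = O(k), and since the harmonic series diverges the energy gap
   <p k.+1, q k.+1 - q k> and the increment of q get small along a
   subsequence.  A cluster point z of that subsequence (B is compact) lies in
   A (A is closed) and the energy tends to proximity x0 z, which makes z the
   maximizer of proximity x0 on A inter B and forces x k --> z. *)

Lemma harmonic_weighted_small {R : realType} {u : nat -> R} (M : R) :
  (forall k, 0 <= u k) -> (forall K, \sum_(k < K) u k <= M) ->
  forall e, 0 < e -> exists k, k.+1%:R * u k < e.
Proof.
move=> u_ge0 u_bnd e e_gt0; apply: contrapT => /forallNP u_big.
have u_ge k : e * harmonic k <= u k.
  by move/negP: (u_big k); rewrite -leNgt /= ler_pdivrMr // mulrC.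
apply: (@dvg_harmonic R); apply: nondecreasing_is_cvgn.
  by apply: nondecreasing_series => k _ _; rewrite /= invr_ge0.
exists (M / e) => _ [n _ <-]; rewrite ler_pdivlMr // mulrC /series /= big_mkord mulr_sumr.
by apply: le_trans (u_bnd n); apply: ler_sum => k _; exact: u_ge.
Qed.

Lemma compact_cluster_along {R : realType} {T : topologicalType} {K : set T}
    {u : nat -> T} (w : nat -> R) :
  compact K -> (forall k, K (u k)) -> (forall e, 0 < e -> exists k, w k < e) ->
  exists2 z, K z & forall e V, 0 < e -> nbhs z V -> exists k, w k < e /\ V (u k).
Proof.
move=> K_compact Ku w_small.
pose F := filter_from [set e : R | 0 < e] (fun e => u @` [set k | w k < e]).
have F_proper : ProperFilter F.
  apply: filter_from_proper; last first.
    by move=> e /w_small [k wk]; exists (u k), k.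
  apply: filter_from_filter; first by exists 1; rewrite /= ltr01.
  move=> e1 e2 e1_gt0 e2_gt0; exists (Num.min e1 e2); first by rewrite /= lt_min e1_gt0.
  by move=> _ [k /= wk <-]; rewrite lt_min in wk; case/andP: wk => wk1 wk2; split; exists k.
have FK : F K by exists 1 => [|_ [k _ <-]]; [exact: ltr01 | exact: Ku].
have [z [Kz z_cluster]] := K_compact F F_proper FK.
exists z => // e V e_gt0 zV.
have Fe : F (u @` [set k | w k < e]) by exists e.
by have [_ [[k wk <-] Vk]] := z_cluster _ _ Fe zV; exists k.
Qed.

Section Euclidean.
Context {R : realType} {N : nat}.
Implicit Types (u v : 'rV[R]_N).

Definition dot u v : R := \sum_(i < N) u ord0 i * v ord0 i.

Lemma sqnorm_ge0 v : 0 <= sqnorm v.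
Proof. by apply: sumr_ge0 => i _; exact: sqr_ge0. Qed.

Lemma sqnorm_ge_sqr_coord v i : v ord0 i ^+ 2 <= sqnorm v.
Proof. by rewrite /sqnorm (bigD1 i) //= lerDl sumr_ge0 // => j _; exact: sqr_ge0. Qed.

Lemma sqnorm_eq0 v : sqnorm v = 0 -> v = 0.
Proof.
move=> /psumr_eq0P v0; apply/rowP => i; rewrite mxE.
by apply/eqP; rewrite -sqrf_eq0 v0 // => j _; exact: sqr_ge0.
Qed.

Lemma norm_le_sqnorm v e : 0 <= e -> sqnorm v <= e ^+ 2 -> `|v| <= e.
Proof.
move=> e_ge0 ve; rewrite [`|v|]mx_normrE; apply: bigmax_le => // -[i j] _ /=.
rewrite (ord1 i) -ler_sqr ?nnegrE // real_normK ?num_real //.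
exact: le_trans (sqnorm_ge_sqr_coord v j) ve.
Qed.

Ltac to_coords := rewrite /dot /sqnorm ?mulr_suml ?mulr_sumr;
  repeat rewrite -?sumrN -?big_split /=; apply: eq_bigr => i _; rewrite ?mxE.

Ltac coordwise := to_coords; by field.

Lemma cauchy_schwarz u v : dot u v ^+ 2 <= sqnorm u * sqnorm v.
Proof.
have [/sqnorm_eq0-> | v_neq0] := eqVneq (sqnorm v) 0.
  rewrite /dot big1 => [|i _]; last by rewrite mxE mulr0.
  by rewrite expr0n mulr_ge0 ?sqnorm_ge0.
have v_gt0 : 0 < sqnorm v by rewrite lt_neqAle eq_sym v_neq0 sqnorm_ge0.
have expand a b : sqnorm (a *: u - b *: v) =
    a ^+ 2 * sqnorm u - 2 * a * b * dot u v + b ^+ 2 * sqnorm v by coordwise.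
have := sqnorm_ge0 (sqnorm v *: u - dot u v *: v); rewrite expand.
nra.
Qed.

Lemma sqnorm_sum_le (v : nat -> 'rV[R]_N) k :
  sqnorm (\sum_(j < k) v j) <= k%:R * \sum_(j < k) sqnorm (v j).
Proof.
elim: k => [|k IH].
  by rewrite !big_ord0 mul0r /sqnorm big1 // => i _; rewrite mxE expr0n.
rewrite !big_ord_recr /=.
case: k IH => [|k IH]; first by rewrite !big_ord0 !add0r mul1r.
set S := \sum_(j < k.+1) v j in IH *; set T := \sum_(j < k.+1) sqnorm _ in IH *.
have expand a : sqnorm (S + a *: v k.+1) =
    sqnorm S + 2 * a * dot S (v k.+1) + a ^+ 2 * sqnorm (v k.+1) by coordwise.
have := expand 1; rewrite scale1r => ->.
have := sqnorm_ge0 (S + (- k.+1%:R) *: v k.+1); rewrite expand.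
have := sqnorm_ge0 (v k.+1); have : 0 <= T by apply: sumr_ge0 => j _; exact: sqnorm_ge0.
have : 0 < k.+1%:R :> R by [].
rewrite [k.+2%:R]mulrS.
nra.
Qed.

Definition convex (C : set 'rV[R]_N) :=
  forall a b t, C a -> C b -> 0 <= t <= 1 -> C (a + t *: (b - a)).

Lemma proj_obtuse {C : set 'rV[R]_N} {u w z : 'rV[R]_N} :
  convex C -> is_proj C u w -> C z -> dot (u - w) (z - w) <= 0.
Proof.
move=> C_convex [Cw w_min] Cz.
set a := dot (u - w) (z - w); set b := sqnorm (z - w).
have b_ge0 : 0 <= b by exact: sqnorm_ge0.
have along_segment t : 0 < t <= 1 -> 2 * a <= t * b.
  move=> /andP[t_gt0 t_le1].
  have := w_min _ (C_convex _ _ t Cw Cz (introT andP (conj (ltW t_gt0) t_le1))).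
  have -> : u - (w + t *: (z - w)) = (u - w) - t *: (z - w).
    by apply/rowP => i; rewrite !mxE; ring.
  have -> : sqnorm ((u - w) - t *: (z - w)) =
      sqnorm (u - w) - 2 * t * a + t ^+ 2 * b by rewrite /a /b; coordwise.
  nra.
rewrite leNgt; apply/negP => a_gt0.
have ab_gt0 : 0 < a + b by lra.
have := along_segment (a / (a + b)); rewrite divr_gt0 // ler_pdivrMr // mul1r.
rewrite lerDl b_ge0 => /(_ isT); rewrite mulrAC ler_pdivlMr //.
nra.
Qed.

Lemma sum_coord_continuous (f : 'I_N -> R -> R) :
  (forall i, continuous (f i)) ->
  continuous (fun z : 'rV[R]_N => \sum_(i < N) f i (z ord0 i)).
Proof.
move=> f_cont; apply: (continuous_big add_continuous) => i _ z.
by apply: continuous_comp; [exact: coord_continuous | exact: f_cont].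
Qed.

(* [proximity x0 c = (sqnorm x0 - sqnorm (x0 - c)) / 2]: maximizing it over a
   set projects [x0] onto that set. *)
Definition proximity (x0 c : 'rV[R]_N) : R := dot x0 c - sqnorm c / 2.

Lemma proximity_continuous x0 : continuous (proximity x0).
Proof.
have -> : proximity x0 =
    (fun c => \sum_(i < N) (x0 ord0 i * c ord0 i - c ord0 i ^+ 2 / 2)).
  by apply/funext => c; rewrite /proximity; coordwise.
apply: (sum_coord_continuous (fun i t => x0 ord0 i * t - t ^+ 2 / 2)) => i t.
apply: cvgB; first exact: cvgM (cvg_cst _) cvg_id.
exact: cvgM (cvgM cvg_id cvg_id) (cvg_cst _).
Qed.

Section Dykstra.
Context {A B : set 'rV[R]_N} {x y p q : nat -> 'rV[R]_N}.
Hypotheses (A_convex : convex A) (B_convex : convex B).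
Hypotheses (p0 : p 0%N = 0) (q0 : q 0%N = 0).
Hypothesis y_proj : forall k, is_proj A (x k + p k) (y k).
Hypothesis p_next : forall k, p k.+1 = x k + p k - y k.
Hypothesis x_proj : forall k, is_proj B (y k + q k) (x k.+1).
Hypothesis q_next : forall k, q k.+1 = y k + q k - x k.+1.

Lemma dykstra_sum k : x k + p k + q k = x 0%N.
Proof.
elim: k => [|k IH]; first by rewrite p0 q0 !addr0.
by rewrite -IH p_next q_next; apply/rowP => i; rewrite !mxE; ring.
Qed.

Lemma y_step k : y k = x k + p k - p k.+1.
Proof. by rewrite p_next; apply/rowP => i; rewrite !mxE; ring. Qed.

Lemma x_step k : x k.+1 = y k + q k - q k.+1.
Proof. by rewrite q_next; apply/rowP => i; rewrite !mxE; ring. Qed.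

Lemma p_normal k {a} : A a -> 0 <= dot (p k) (y k.-1 - a).
Proof.
case: k => [|k] Aa; first by rewrite p0 /dot big1 // => i _; rewrite mxE mul0r.
have := proj_obtuse A_convex (y_proj k) Aa; rewrite -p_next.
have -> : dot (p k.+1) (a - y k) = - dot (p k.+1) (y k - a) by coordwise.
by rewrite oppr_le0.
Qed.

Lemma q_normal k {b} : B b -> 0 <= dot (q k) (x k - b).
Proof.
case: k => [|k] Bb; first by rewrite q0 /dot big1 // => i _; rewrite mxE mul0r.
have := proj_obtuse B_convex (x_proj k) Bb; rewrite -q_next.
have -> : dot (q k.+1) (b - x k.+1) = - dot (q k.+1) (x k.+1 - b) by coordwise.
by rewrite oppr_le0.
Qed.

(* The Lyapunov function of Boyle and Dykstra; at [k = 0] the junk value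
   [y 0.-1 = y 0] is harmless because [p 0 = 0]. *)
Definition energy k := sqnorm (x k) / 2 + dot (p k) (y k.-1) + dot (q k) (x k).

Lemma energyE k c : energy k - proximity (x 0%N) c =
  sqnorm (x k - c) / 2 + dot (p k) (y k.-1 - c) + dot (q k) (x k - c).
Proof. by rewrite /energy /proximity -(dykstra_sum k); coordwise. Qed.

Lemma energy_step k : energy k - energy k.+1 =
  sqnorm (p k.+1 - p k) / 2 + sqnorm (q k.+1 - q k) / 2 +
  dot (p k) (y k.-1 - y k) + dot (q k) (x k - x k.+1).
Proof. by rewrite /energy /= (x_step k) (y_step k); coordwise. Qed.

Lemma energy_decrease k :
  energy k.+1 + sqnorm (p k.+1 - p k) / 2 + sqnorm (q k.+1 - q k) / 2 <= energy k.
Proof.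
have := energy_step k; have := p_normal k (y_proj k).1; have := q_normal k (x_proj k).1.
lra.
Qed.

Lemma energy_nonincreasing : nonincreasing_seq energy.
Proof.
apply/nonincreasing_seqP => k; have := energy_decrease k.
have := sqnorm_ge0 (p k.+1 - p k); have := sqnorm_ge0 (q k.+1 - q k); lra.
Qed.

Lemma energy_gap k :
  energy k.+1 - proximity (x 0%N) (x k.+1) = dot (p k.+1) (q k.+1 - q k).
Proof. by rewrite energyE /= (x_step k); coordwise. Qed.

Definition defect k :=
  Num.max (sqnorm (q k.+1 - q k)) (energy k.+1 - proximity (x 0%N) (x k.+1)).

Section Feasible.
Context {c : 'rV[R]_N}.
Hypotheses (Ac : A c) (Bc : B c).

Let S := energy 0%N - proximity (x 0%N) c.

Lemma sqnorm_sub_le_energy k :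
  sqnorm (x k - c) / 2 <= energy k - proximity (x 0%N) c.
Proof.
by rewrite energyE; have := p_normal k Ac; have := q_normal k Bc; lra.
Qed.

Lemma proximity_le_energy k : proximity (x 0%N) c <= energy k.
Proof. have := sqnorm_sub_le_energy k; have := sqnorm_ge0 (x k - c); lra. Qed.

Lemma steps_sqnorm_sum K :
  \sum_(j < K) sqnorm (p j.+1 - p j) + \sum_(j < K) sqnorm (q j.+1 - q j) <= 2 * S.
Proof.
have telescope n : \sum_(j < n) sqnorm (p j.+1 - p j) + \sum_(j < n) sqnorm (q j.+1 - q j)
    <= 2 * (energy 0%N - energy n).
  elim: n => [|n IH]; first by rewrite !big_ord0 subrr; lra.
  by rewrite !big_ord_recr /=; have := energy_decrease n; lra.
by have := telescope K; have := proximity_le_energy K; rewrite /S; lra.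
Qed.

Lemma p_sqnorm_le k : sqnorm (p k) <= 2 * S * k%:R.
Proof.
have -> : p k = \sum_(j < k) (p j.+1 - p j).
  by rewrite -(big_mkord xpredT (fun j => p j.+1 - p j)) telescope_sumr // p0 subr0.
apply: (le_trans (sqnorm_sum_le (fun j => p j.+1 - p j) k)); rewrite mulrC.
apply: ler_wpM2r => //.
have := steps_sqnorm_sum k.
have : 0 <= \sum_(j < k) sqnorm (q j.+1 - q j) by apply: sumr_ge0 => j _; exact: sqnorm_ge0.
lra.
Qed.

Lemma gap_sqr_le k :
  dot (p k.+1) (q k.+1 - q k) ^+ 2 <= 2 * S * (k.+1%:R * sqnorm (q k.+1 - q k)).
Proof.
apply: le_trans (cauchy_schwarz _ _) _; rewrite mulrA.
by apply: ler_wpM2r; [exact: sqnorm_ge0 | exact: p_sqnorm_le].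
Qed.

Lemma defect_small e : 0 < e -> exists k, defect k < e.
Proof.
move=> e_gt0; have S_ge0 : 0 <= S by rewrite /S subr_ge0 proximity_le_energy.
(* Small enough for [sqnorm (q k.+1 - q k) < e] and, through [gap_sqr_le],
   for [gap ^+ 2 <= 2 S d < e ^+ 2]. *)
set d := Num.min e (e ^+ 2 / (2 * S + 1)).
have d_gt0 : 0 < d by rewrite lt_min e_gt0 divr_gt0 ?exprn_gt0 //; lra.
have d_le_e : d <= e by rewrite ge_min lexx.
have d_le_sqr : d * (2 * S + 1) <= e ^+ 2.
  by rewrite -ler_pdivlMr ?ge_min ?lexx ?orbT //; lra.
have [k small] : exists k, k.+1%:R * sqnorm (q k.+1 - q k) < d.
  apply: (harmonic_weighted_small (2 * S) (fun k => sqnorm_ge0 (q k.+1 - q k))) => // K.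
  have := steps_sqnorm_sum K.
  have : 0 <= \sum_(j < K) sqnorm (p j.+1 - p j) by apply: sumr_ge0 => j _; exact: sqnorm_ge0.
  lra.
have k_ge1 : 1 <= k.+1%:R :> R by rewrite ler1n.
have := sqnorm_ge0 (q k.+1 - q k); have := gap_sqr_le k.
exists k; rewrite /defect gt_max energy_gap; apply/andP; split; nra.
Qed.

End Feasible.

Section Cluster.
Context {z : 'rV[R]_N}.
Hypothesis z_cluster :
  forall e V, 0 < e -> nbhs z V -> exists k, defect k < e /\ V (x k.+1).

Lemma cluster_in_closure : closure A z.
Proof.
move=> V /nbhs_normP[e /= e_gt0 zeV]; have e2_gt0 : 0 < e / 2 by lra.
have near_z : nbhs z [set v | `|z - v| < e / 2].
  by apply: (nbhs_normP z _).2; exists (e / 2).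
have [k [dk /= xk_near]] := z_cluster _ _ (exprn_gt0 2 e2_gt0) near_z.
exists (y k); split; first exact: (y_proj k).1.
apply: zeV; rewrite /ball_ /=.
have -> : z - y k = (z - x k.+1) - (q k.+1 - q k).
  by rewrite (x_step k); apply/rowP => i; rewrite !mxE; ring.
have : `|q k.+1 - q k| <= e / 2.
  by apply: norm_le_sqnorm; [lra | move: dk; rewrite gt_max => /andP[/ltW]].
have := ler_normB (z - x k.+1) (q k.+1 - q k); lra.
Qed.

Lemma cluster_energy e : 0 < e -> exists k, energy k.+1 < proximity (x 0%N) z + e.
Proof.
move=> e_gt0; have e2_gt0 : 0 < e / 2 by lra.
have near_z : nbhs z [set v | proximity (x 0%N) v < proximity (x 0%N) z + e / 2].
  move/cvgrPdist_lt: (proximity_continuous (x 0%N) z) => /(_ _ e2_gt0).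
  by apply: filterS => v /=; rewrite ltr_norml; lra.
have [k [dk /= xk_near]] := z_cluster _ _ e2_gt0 near_z.
by exists k; move: dk; rewrite gt_max => /andP[_]; lra.
Qed.

End Cluster.

Theorem dykstra_cvg c0 : A c0 -> B c0 -> closed A -> compact B ->
  exists z, [/\ A z, B z, x @ \oo --> z &
    forall c, A c -> B c -> proximity (x 0%N) c <= proximity (x 0%N) z].
Proof.
move=> Ac0 Bc0 A_closed B_compact.
have [z Bz z_cluster] := compact_cluster_along defect B_compact
  (fun k => (x_proj k).1) (defect_small Ac0 Bc0).
have Az : A z by rewrite (closure_id A).1 //; exact: cluster_in_closure z_cluster.
exists z; split => //; last first.
  move=> c Ac Bc; apply/ler_addgt0Pr => e /(cluster_energy z_cluster)[k ek].
  exact: le_trans (proximity_le_energy Ac Bc k.+1) (ltW ek).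
apply/cvgrPdist_lt => e e_gt0; have e2_gt0 : 0 < e / 2 by lra.
have eps_gt0 : 0 < (e / 2) ^+ 2 / 2 by rewrite divr_gt0 ?exprn_gt0.
have [k ek] := cluster_energy z_cluster _ eps_gt0.
exists k.+1 => // n /= kn; rewrite distrC.
have : `|x n - z| <= e / 2.
  apply: norm_le_sqnorm; first lra.
  have := sqnorm_sub_le_energy Az Bz n; have := energy_nonincreasing _ _ kn; lra.
lra.
Qed.

End Dykstra.

Lemma sum_convex_comb (c : 'I_N -> R) (a b : 'rV[R]_N) t :
  \sum_(i < N) (a + t *: (b - a)) ord0 i * c i =
  (1 - t) * \sum_(i < N) a ord0 i * c i + t * \sum_(i < N) b ord0 i * c i.
Proof. by rewrite !mulr_sumr -big_split /=; apply: eq_bigr => i _; rewrite !mxE; ring. Qed.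

Lemma convex_P3set xi mum mup : convex (P3set xi mum mup).
Proof.
move=> a b t /andP[a_ge a_le] /andP[b_ge b_le] /andP[t_ge0 t_le1].
by rewrite /P3set /= sum_convex_comb; apply/andP; split; nra.
Qed.

Lemma convex_simplex : convex (@simplex R N).
Proof.
move=> a b t [a_ge0 a_sum] [b_ge0 b_sum] /andP[t_ge0 t_le1]; split.
  by move=> i; rewrite !mxE; have := a_ge0 i; have := b_ge0 i; nra.
have := sum_convex_comb (fun=> 1) a b t.
by rewrite !(eq_bigr _ (fun i _ => mulr1 _)) a_sum b_sum => ->; ring.
Qed.

Lemma closed_linear_preimage (c : 'I_N -> R) (C : set R) :
  closed C -> closed [set z : 'rV[R]_N | C (\sum_(i < N) z ord0 i * c i)].
Proof.
apply: (continuous_closedP _).1.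
apply: (sum_coord_continuous (fun i t => t * c i)) => i t.
exact: cvgM cvg_id (cvg_cst _).
Qed.

Section Scaling.
Context {r : 'I_N -> R}.
Hypothesis r_gt0 : forall i, 0 < r i.
Let rinv i := (r i)^-1.

Lemma dmulK z : dmul r (dmul rinv z) = z.
Proof. by apply/rowP => i; rewrite !mxE mulrA mulfV ?mul1r // gt_eqF. Qed.

Lemma dmulVK z : dmul rinv (dmul r z) = z.
Proof. by apply/rowP => i; rewrite !mxE mulrA mulVf ?mul1r // gt_eqF. Qed.

Lemma dimageE (S : set 'rV[R]_N) : dimage r S = dmul rinv @^-1` S.
Proof.
apply/seteqP; split => [_ [w Sw <-]|z Sz] /=; first by rewrite dmulVK.
by exists (dmul rinv z); rewrite ?dmulK.
Qed.

Lemma convex_dimage {S : set 'rV[R]_N} : convex S -> convex (dimage r S).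
Proof.
move=> S_convex _ _ t [a Sa <-] [b Sb <-] t01.
exists (a + t *: (b - a)); first exact: S_convex.
by apply/rowP => i; rewrite !mxE; ring.
Qed.

Lemma closed_dimage_P3set xi mum mup : closed (dimage r (P3set xi mum mup)).
Proof.
have -> : dimage r (P3set xi mum mup) =
    [set z | `[mum, mup]%classic (\sum_(i < N) z ord0 i * (rinv i * xi i))].
  rewrite dimageE; apply/funext => z; rewrite /= /P3set /= in_itv /=.
  by rewrite (eq_bigr (fun i => z ord0 i * (rinv i * xi i))) // => i _; rewrite mxE; ring.
by apply: closed_linear_preimage; exact: itv_closed.
Qed.

Lemma compact_dimage_simplex : compact (dimage r (@simplex R N)).
Proof.
have in_box : dimage r (@simplex R N) `<=` [set v | forall i, `[0, r i]%classic (v ord0 i)].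
  move=> _ [w [w_ge0 w_sum] <-] i; rewrite /= in_itv /= mxE.
  have w_le1 : w ord0 i <= 1.
    by rewrite -w_sum (bigD1 i) //= lerDl sumr_ge0 // => j _; exact: w_ge0.
  by apply/andP; split; have := w_ge0 i; have := r_gt0 i; nra.
have box_compact := rV_compact (fun i => @segment_compact R 0 (r i)).
apply: (subclosed_compact _ box_compact in_box).
have rinv_gt0 i : 0 < rinv i by rewrite invr_gt0.
have -> : dimage r (@simplex R N) =
    \bigcap_(i in [set: 'I_N]) ((fun z => z ord0 i) @^-1` [set t | 0 <= t]) `&`
    [set z | [set t | t = 1] (\sum_(i < N) z ord0 i * rinv i)].
  rewrite dimageE; apply/seteqP; split => z /= [z_ge0 z_sum].
    split=> [i _|]; first by have := z_ge0 i; rewrite mxE pmulr_rge0.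
    by rewrite -z_sum; apply: eq_bigr => i _; rewrite mxE mulrC.
  split=> [i|]; first by rewrite mxE pmulr_rge0 //; exact: z_ge0.
  by rewrite -z_sum; apply: eq_bigr => i _; rewrite mxE mulrC.
apply: closedI; last by apply: closed_linear_preimage; exact: closed_eq.
apply: closed_bigI => i _; apply: (continuous_closedP _).1; last exact: closed_ge.
exact: coord_continuous.
Qed.

Lemma objective_proximity {d : 'I_N -> R} : (forall i, r i ^+ 2 = d i) ->
  forall beta w, objective d beta w = - proximity (dmul rinv beta) (dmul r w).
Proof.
move=> rd beta w; rewrite /objective /proximity opprB addrC mulrC; to_coords.
by rewrite -rd /rinv; field; rewrite gt_eqF.
Qed.

End Scaling.

End Euclidean.

Theorem proposition2p2 (R : realType) (V : completeNormedModType R)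
  (ip : V -> V -> R) (N : nat) (lambda : R) (a xs : 'I_N -> V)
  (xi : 'I_N -> R) (mum mup : R)
  (x y p q : nat -> 'rV[R]_N) :
  is_hilbert_inner ip ->
  0 < lambda ->
  (forall i, a i != 0) ->
  (exists p0 : 'rV[R]_N, interior (@nonneg_orthant R N) p0 /\
      interior (P3set xi mum mup) p0 /\ @P1set R N p0) ->
  let d := fun i => lambda * `|a i| ^+ 2 in
  let beta : 'rV[R]_N := \row_i (ip (a i) (xs i) + xi i) in
  let r := fun i => Num.sqrt (d i) in
  let rinv := fun i => (Num.sqrt (d i))^-1 in
  x 0%N = dmul rinv beta ->
  p 0%N = 0 -> q 0%N = 0 ->
  (forall k, is_proj (dimage r (P3set xi mum mup)) (x k + p k) (y k)) ->
  (forall k, p k.+1 = x k + p k - y k) ->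
  (forall k, is_proj (dimage r (@simplex R N)) (y k + q k) (x k.+1)) ->
  (forall k, q k.+1 = y k + q k - x k.+1) ->
  exists qlim : 'rV[R]_N,
    x @ \oo --> qlim /\
    Pset xi mum mup (dmul rinv qlim) /\
    (forall p' : 'rV[R]_N, Pset xi mum mup p' ->
       objective d beta (dmul rinv qlim) <= objective d beta p').
Proof.
(* The Hilbert-space structure only enters through the data [beta]. *)
move=> _ lambda_gt0 a_neq0 [c [c_orth [c_P3 c_P1]]] d beta r rinv x0E p0 q0
  y_proj p_next x_proj q_next.
have d_gt0 i : 0 < d i by rewrite mulr_gt0 // exprn_gt0 // normr_gt0.
have r_gt0 i : 0 < r i by rewrite sqrtr_gt0.
have rd i : r i ^+ 2 = d i by rewrite sqr_sqrtr // ltW.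
have Ac : dimage r (P3set xi mum mup) (dmul r c).
  by exists c => //; exact: interior_subset c_P3.
have Bc : dimage r (@simplex R N) (dmul r c).
  by exists c => //; split => //; exact: interior_subset c_orth.
have [z [Az Bz x_cvg z_opt]] := dykstra_cvg
  (convex_dimage (convex_P3set xi mum mup)) (convex_dimage convex_simplex)
  p0 q0 y_proj p_next x_proj q_next _ Ac Bc
  (closed_dimage_P3set r_gt0 xi mum mup) (compact_dimage_simplex r_gt0).
move: Az Bz; rewrite !(dimageE r_gt0) => Az Bz.
exists z; split=> //; split=> [|w [w_simplex w_P3]]; first exact: (conj Bz Az).
rewrite !(objective_proximity r_gt0 rd) dmulK // -x0E lerN2.
by apply: z_opt; exists w.
Qed.
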